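(* Let $s,t,q,N$ be integers with $0\le s<q$, $1\le t<q$, $N\ge0$, $t\nmid q$ and $\gcd(t,q)=g>1$. Put $\tilde t=t/g$, $\tilde q=q/g$, and write $s=\overline s g+s_g$ ($0\le s_g<g$), $\overline s=\overline{\overline s}\tilde t+\hat{\hat s}$ ($0\le\hat{\hat s}<\tilde t$), $\tilde q=\overline{\overline q}\tilde t+\hat{\hat q}$ ($1\le\hat{\hat q}<\tilde t$). Let $S^+(s,t,q,N)=\sum_{k=0}^N\lfloor(s+kt)/q\rfloor$, $M=\lfloor(s+Nt)/q\rfloor$, $x_M=(Mq-s)/t$, $S=\lfloor q/t\rfloor\frac{M(M-1)}2+M(N-\lceil x_M\rceil+1)$, $H=\{k\in\mathbb N:(\hat{\hat s}-k\hat{\hat q})\bmod\tilde t<\hat{\hat q}\}$, $J=H\cap\{0,\dots,\tilde t-1\}=\{j_0<\dots<j_{\hat{\hat q}-1}\}$, and $S_K=\sum_{k\in K}k$. Then: (a) if $j_0\ge M$, $S^+(s,t,q,N)=S$; (b.1) if $j_0<M\le j_{\hat{\hat q}-1}$, $S^+(s,t,q,N)=S+S_K$ with $K=H\cap\{0,\dots,M-1\}$; (b.2) if $j_{\hat{\hat q}-1}<M$ and $j_0+\tilde t\ge M$, $S^+(s,t,q,N)=S+S_J$; (b.3) if $j_{\hat{\hat q}-1}<M$ and $j_0+\tilde t<M$, with $u=\lfloor(M-1)/\tilde t\rfloor$ and $K=H\cap\{u\tilde t,\dots,M-1\}$, $S^+(s,t,q,N)=S+uS_J+\hat{\hat q}\,\tilde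 t\frac{(u-1)u}2+S_K$.
   Context: Here $r\bmod \tilde t$ denotes the representative of $r$ in $\{0,\dots,\tilde t-1\}$. *)

From HB Require Import structures.
From mathcomp Require Import all_boot all_order all_algebra.
Set Implicit Arguments. Unset Strict Implicit. Unset Printing Implicit Defensive.
Import Order.TTheory GRing.Theory Num.Theory.

Definition gg (t q : nat) : nat := gcdn t q.
Definition tt (t q : nat) : nat := t %/ gg t q.
Definition qt (t q : nat) : nat := q %/ gg t q.
Definition sbar (s t q : nat) : nat := s %/ gg t q.
Definition shh (s t q : nat) : nat := sbar s t q %% tt t q.
Definition qhh (t q : nat) : nat := qt t q %% tt t q.

Definition Splus (s t q N : nat) : nat := \sum_(0 <= k < N.+1) ((s + k * t) %/ q).
Definition MM (s t q N : nat) : nat := (s + N * t) %/ q.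
Definition xM (s t q N : nat) : rat :=
  (((MM s t q N * q)%:R - s%:R) / t%:R)%R.
Definition SS (s t q N : nat) : int :=
  let M := MM s t q N in
  (((q %/ t) * ((M * (M - 1)) %/ 2))%:Z + M%:Z * (N%:Z - Num.ceil (xM s t q N) + 1))%R.

Definition inH (s t q : nat) (k : nat) : bool :=
  ((((shh s t q)%:Z - k%:Z * (qhh t q)%:Z) %% (tt t q)%:Z)%Z < (qhh t q)%:Z)%R.
Definition JJ (s t q : nat) : seq nat := [seq k <- iota 0 (tt t q) | inH s t q k].
Definition j0 (s t q : nat) : nat := head 0 (JJ s t q).
Definition jlast (s t q : nat) : nat := last 0 (JJ s t q).
Definition SJ (s t q : nat) : nat := \sum_(k <- JJ s t q) k.

(* Count [S^+] by levels: [⌊(s + k t) / q⌋ >= m] holds exactly from the index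
   [c m = ⌈(m q - s) / t⌉] on, so [S^+ = M (N + 1) - Σ_{m=1}^{M} c m].  The increment
   [c (m+1) - c m] is [⌊q / t⌋], plus one exactly when [(s - m q) mod t < q mod t];
   dividing everything by [g = gcd t q] turns this carry condition into [m ∈ H].
   Abel summation then gives [S^+ = S + Σ_{k < M, k ∈ H} k] for all parameters, and
   the four cases merely evaluate this sum using that [H] is [t~]-periodic with
   [q^^] elements per period. *)

From HB Require Import structures.
From mathcomp Require Import all_boot all_order all_algebra.
From mathcomp Require Import zify ring.
Import Order.TTheory GRing.Theory Num.Theory.
Set Implicit Arguments. Unset Strict Implicit.

Local Open Scope ring_scope.

Lemma ceil_divz (R : archiRealFieldType) (a : int) (t : nat) : (0 < t)%N ->
  Num.ceil ((a%:~R : R) / t%:R) = - ((- a) %/ t%:Z)%Z.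
Proof.
move=> t0; rewrite ceilNfloor; congr (- _).
have tR : (0 : R) < t%:R by rewrite ltr0n.
apply: floor_def; rewrite -mulNr -rmorphN /=.
rewrite ler_pdivlMr // ltr_pdivrMr // -[t%:R]/((t%:Z)%:~R : R) -!intrM.
by rewrite ler_int ltr_int lez_floor ?ltz_ceil // -lt0n.
Qed.

Lemma divz_sub_carry (a : int) (t Q r : nat) : (0 < t)%N -> (r < t)%N ->
  (a %/ t)%Z - ((a - (Q * t + r)%N%:Z) %/ t)%Z
   = Q%:Z + ((a %% t)%Z < r%:Z)%R%:Z.
Proof.
move=> t0 rt; have tn0 : t%:Z != 0 by rewrite -lt0n in t0 *.
have m0 : 0 <= (a %% t)%Z by exact: modz_ge0.
have mt : (a %% t)%Z < t%:Z by rewrite ltz_pmod ?ltz_nat.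
have {2}-> := divz_eq a t%:Z.
move: m0 mt; set m := (a %% t)%Z; set d := (a %/ t)%Z => m0 mt.
case: (boolP (m < r%:Z)) => /= [mr|rm].
  have -> : d * t%:Z + m - (Q * t + r)%N%:Z = (d - Q%:Z - 1) * t%:Z + (m - r%:Z + t%:Z).
    by rewrite PoszD PoszM; ring.
  by rewrite divzMDl // divz_small ?absz_nat; [ring | lia].
have -> : d * t%:Z + m - (Q * t + r)%N%:Z = (d - Q%:Z) * t%:Z + (m - r%:Z).
  by rewrite PoszD PoszM; ring.
by rewrite divzMDl // divz_small ?absz_nat; [ring | lia].
Qed.

Lemma ltz_mulDr_small (y e r : int) (g : nat) : 0 <= r < g%:Z ->
  (y * g%:Z + r < e * g%:Z) = (y < e).
Proof. by move=> /andP[r0 rg]; apply/idP/idP; nia. Qed.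

Lemma modz_mulDr_small (x r : int) (T g : nat) : (0 < T)%N -> 0 <= r < g%:Z ->
  ((x * g%:Z + r) %% (T * g)%N%:Z)%Z = (x %% T)%Z * g%:Z + r.
Proof.
move=> T0 /andP[r0 rg]; have Tn0 : T%:Z != 0 by rewrite -lt0n in T0 *.
have {1}-> : x = (x %/ T)%Z * T%:Z + (x %% T)%Z := divz_eq x T%:Z.
have m0 : 0 <= (x %% T)%Z by exact: modz_ge0.
have mT : (x %% T)%Z < T%:Z by rewrite ltz_pmod ?ltz_nat.
rewrite PoszM mulrDl -mulrA -addrA modzMDl modz_small //; nia.
Qed.

Lemma inH_modE (s t q k : nat) : (0 < t)%N ->
  inH s t q k = (((s%:Z - (k * q)%N%:Z) %% t%:Z)%Z < (q %% t)%N%:Z).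
Proof.
move=> t0; rewrite /inH /shh /qhh /sbar /tt /qt /gg.
set g := gcdn t q; set T := (t %/ g)%N; set Q := (q %/ g)%N; set sb := (s %/ g)%N.
have g0 : (0 < g)%N by rewrite gcdn_gt0 t0.
have tE : t = (T * g)%N by rewrite divnK ?dvdn_gcdl.
have qE : q = (Q * g)%N by rewrite divnK ?dvdn_gcdr.
have T0 : (0 < T)%N by move: t0; rewrite tE muln_gt0 => /andP[].
have sg_small : 0 <= (s %% g)%N%:Z < g%:Z by rewrite ltz_nat ltn_mod g0.
have -> : s%:Z - (k * q)%N%:Z = (sb%:Z - k%:Z * Q%:Z) * g%:Z + (s %% g)%N%:Z.
  by rewrite {1}(divn_eq s g) {1}qE PoszD !PoszM; ring.
have -> : (q %% t)%N = ((Q %% T) * g)%N by rewrite {1}qE tE muln_modl.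
rewrite {1}tE modz_mulDr_small // PoszM ltz_mulDr_small //.
have -> : sb%:Z - k%:Z * Q%:Z = ((sb %/ T)%N%:Z - k%:Z * (Q %/ T)%N%:Z) * T%:Z
                                 + ((sb %% T)%N%:Z - k%:Z * (Q %% T)%N%:Z).
  by rewrite {1}(divn_eq sb T) {1}(divn_eq Q T) !PoszD !PoszM; ring.
by rewrite modzMDl.
Qed.

(* [level_entry s t q m] is [⌈(m q - s) / t⌉], written with the integer floor;
   for [s < q] and [0 < m] it is the least [k] with [m <= ⌊(s + k t) / q⌋]. *)
Definition level_entry (s t q m : nat) : int := - ((s%:Z - (m * q)%N%:Z) %/ t%:Z)%Z.

Lemma MM_leS (s t q N : nat) : (MM s t q N <= MM s t q N.+1)%N.
Proof. by rewrite leq_div2r // leq_add2l leq_mul2r leqnSn orbT. Qed.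

Lemma level_entry_eq (s t q N m : nat) : (0 < t)%N -> (0 < q)%N ->
  (MM s t q N < m <= MM s t q N.+1)%N -> level_entry s t q m = N.+1%:Z.
Proof.
move=> t0 q0 /andP[]; rewrite /level_entry /MM ltn_divLR // leq_divRL // => lo hi.
have -> : s%:Z - (m * q)%N%:Z = - N.+1%:Z * t%:Z + (s + N.+1 * t - m * q)%N%:Z.
  by rewrite -(subzn hi) !PoszD !PoszM; ring.
rewrite divzMDl -?lt0n // divz_small ?addr0 ?opprK //.
by rewrite absz_nat ltz_nat; lia.
Qed.

Lemma Splus_level_entry (s t q N : nat) : (0 < t)%N -> (s < q)%N ->
  (Splus s t q N)%:Z =
  (MM s t q N * N.+1)%N%:Z - \sum_(1 <= m < (MM s t q N).+1) level_entry s t q m.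
Proof.
move=> t0 sq; have q0 : (0 < q)%N by apply: leq_ltn_trans sq.
elim: N => [|N IH].
  by rewrite /Splus /MM big_nat1 mul0n addn0 divn_small // big_geq.
have -> : Splus s t q N.+1 = (Splus s t q N + MM s t q N.+1)%N.
  by rewrite /Splus big_nat_recr.
rewrite (@big_cat_nat _ _ _ (MM s t q N).+1) //= ?ltnS ?MM_leS //.
rewrite [X in _ - (_ + X)](@eq_big_nat _ _ _ _ _ _ (fun=> N.+1%:Z)); last first.
  by move=> m; apply: level_entry_eq.
rewrite sumr_const_nat subSS PoszD IH.
have := MM_leS s t q N; move: (MM s t q N) (MM s t q N.+1) => a b ab.
rewrite -mulr_natr natz -(subzn ab) !PoszM -[N.+2]addn1 -[N.+1]addn1 !PoszD; ring.
Qed.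

Lemma level_entryS (s t q k : nat) : (0 < t)%N ->
  level_entry s t q k.+1 - level_entry s t q k = (q %/ t)%N%:Z + (inH s t q k : nat)%:Z.
Proof.
move=> t0; rewrite /level_entry opprK addrC inH_modE //.
have -> : s%:Z - (k.+1 * q)%N%:Z = s%:Z - (k * q)%N%:Z - (q %/ t * t + q %% t)%N%:Z.
  by rewrite -divn_eq mulSn PoszD; ring.
by rewrite divz_sub_carry // ltn_mod.
Qed.

Lemma half_mul_predS (M : nat) : ((M.+1 * (M.+1 - 1)) %/ 2 = (M * (M - 1)) %/ 2 + M)%N.
Proof. by rewrite !subn1 !divn2 -!bin2 binS bin1. Qed.

(* Abel summation of the increments given by [level_entryS]. *)
Lemma sum_level_entry (s t q M : nat) : (0 < t)%N ->
  \sum_(1 <= m < M.+1) level_entry s t q m =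
    M%:Z * level_entry s t q M - ((q %/ t) * ((M * (M - 1)) %/ 2))%N%:Z
    - (\sum_(0 <= k < M | inH s t q k) k)%N%:Z.
Proof.
move=> t0; elim: M => [|M IH].
  by rewrite !big_geq // mul0r mul0n div0n muln0 !subr0.
rewrite big_nat_recr //= IH half_mul_predS.
have -> : level_entry s t q M.+1 =
          level_entry s t q M + (q %/ t)%N%:Z + (inH s t q M : nat)%:Z.
  by rewrite -addrA -level_entryS // addrC subrK.
rewrite [in RHS]big_mkcond big_nat_recr //= -big_mkcond /=.
by case: (inH s t q M); rewrite /= -[M.+1]addn1 ?addn0 !PoszD !PoszM; ring.
Qed.

Lemma ceil_xM (s t q N : nat) : (0 < t)%N ->
  Num.ceil (xM s t q N) = level_entry s t q (MM s t q N).
Proof.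
move=> t0; rewrite /xM /level_entry.
have -> : (MM s t q N * q)%:R - s%:R = ((MM s t q N * q)%N%:Z - s%:Z)%:~R :> rat.
  by rewrite rmorphB.
by rewrite ceil_divz // opprB.
Qed.

Lemma Splus_SS (s t q N : nat) : (0 < t)%N -> (s < q)%N ->
  (Splus s t q N)%:Z = SS s t q N + (\sum_(0 <= k < MM s t q N | inH s t q k) k)%N%:Z.
Proof.
move=> t0 sq; rewrite Splus_level_entry // sum_level_entry // /SS ceil_xM //.
by rewrite !PoszM; ring.
Qed.

Lemma tt_gt0 (t q : nat) : (0 < t)%N -> (0 < tt t q)%N.
Proof. by move=> t0; rewrite divn_gt0 ?gcdn_gt0 ?t0 // dvdn_leq ?dvdn_gcdl. Qed.

Lemma inH_addMt (s t q k n : nat) : inH s t q (k + n * tt t q) = inH s t q k.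
Proof.
rewrite /inH; congr (_ < _).
have -> : (shh s t q)%:Z - (k + n * tt t q)%N%:Z * (qhh t q)%:Z
        = - (n%:Z * (qhh t q)%:Z) * (tt t q)%:Z + ((shh s t q)%:Z - k%:Z * (qhh t q)%:Z).
  by rewrite PoszD PoszM; ring.
exact: modzMDl.
Qed.

Lemma inH_modt (s t q k : nat) : inH s t q k = inH s t q (k %% tt t q).
Proof. by rewrite {1}(divn_eq k (tt t q)) addnC inH_addMt. Qed.

Lemma level_entry_tt (s t q : nat) : (0 < t)%N ->
  level_entry s t q (tt t q) = level_entry s t q 0 + (qt t q)%:Z.
Proof.
move=> t0; rewrite /level_entry mul0n subr0.
have -> : (tt t q * q = qt t q * t)%N.
  by rewrite /tt /qt /gg !divn_mulAC ?dvdn_gcdl ?dvdn_gcdr // mulnC.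
by rewrite PoszM addrC -mulNr divzMDl -?lt0n //; ring.
Qed.

(* Telescoping [level_entryS] over one period: [qt = tt ⌊q/t⌋ + #(H ∩ [0, tt))]. *)
Lemma count_inH (s t q : nat) : (0 < t)%N ->
  (\sum_(0 <= k < tt t q | inH s t q k) 1)%N = qhh t q.
Proof.
move=> t0; have g0 : (0 < gg t q)%N by rewrite gcdn_gt0 t0.
have tel := telescope_sumr_eq (level_entry s t q)
  (fun k => (q %/ t)%N%:Z + (inH s t q k : nat)%:Z) (leq0n (tt t q))
  (fun k _ => esym (level_entryS s q k t0)).
rewrite level_entry_tt // addrAC subrr add0r big_split /= sumr_const_nat subn0 in tel.
have q_div_t : (q %/ t = qt t q %/ tt t q)%N.
  rewrite -(@divnMl (gg t q) (qt t q) (tt t q) g0) /tt /qt.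
  by rewrite !(mulnC (gg t q)) !divnK ?dvdn_gcdl ?dvdn_gcdr.
have count_eq : \sum_(0 <= k < tt t q) (inH s t q k : nat)%:Z
               = (\sum_(0 <= k < tt t q | inH s t q k) 1)%N%:Z.
  by rewrite -natz natr_sum [RHS]big_mkcond; apply: eq_bigr => k _; case: (inH s t q k).
rewrite count_eq q_div_t -mulr_natr natz -PoszM -PoszD in tel.
move/eqP: tel; rewrite eqz_nat [X in _ == X](divn_eq (qt t q) (tt t q)) eqn_add2l.
by move/eqP.
Qed.

Lemma mem_JJ (s t q k : nat) : (k \in JJ s t q) = (k < tt t q)%N && inH s t q k.
Proof. by rewrite /JJ mem_filter mem_iota add0n andbC. Qed.

Lemma SJE (s t q : nat) : SJ s t q = (\sum_(0 <= k < tt t q | inH s t q k) k)%N.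
Proof. by rewrite /SJ /JJ big_filter /index_iota subn0. Qed.

Lemma JJ_sorted (s t q : nat) : sorted leq (JJ s t q).
Proof. exact/sorted_filter/iota_sorted/leq_trans. Qed.

Lemma sorted_leq_last (l : seq nat) (x0 x : nat) :
  sorted leq l -> x \in l -> (x <= last x0 l)%N.
Proof.
elim: l x0 => [|a l IH] x0 //= a_l; rewrite inE => /predU1P[-> | x_l].
  have /allP le_a := order_path_min leq_trans a_l.
  by have /predU1P[-> // | /le_a] := mem_last a l.
exact: IH (path_sorted a_l) x_l.
Qed.

Lemma j0_le (s t q x : nat) : x \in JJ s t q -> (j0 s t q <= x)%N.
Proof.
rewrite /j0; case: (JJ s t q) (JJ_sorted s t q) => [|a l] //= a_l.
rewrite inE => /predU1P[-> // | x_l].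
by have /allP := order_path_min leq_trans a_l; apply.
Qed.

Lemma jlast_ge (s t q x : nat) : x \in JJ s t q -> (x <= jlast s t q)%N.
Proof. exact: sorted_leq_last (JJ_sorted s t q). Qed.

Lemma modt_in_JJ (s t q k : nat) : (0 < t)%N -> inH s t q k ->
  (k %% tt t q)%N \in JJ s t q.
Proof. by move=> t0; rewrite mem_JJ ltn_mod tt_gt0 //= -inH_modt. Qed.

Lemma sum_inH_le_j0 (s t q M : nat) : (0 < t)%N -> (M <= j0 s t q)%N ->
  (\sum_(0 <= k < M | inH s t q k) k)%N = 0%N.
Proof.
move=> t0 M_j0; rewrite big_nat_cond big_pred0 // => k.
apply/negP => /andP[/andP[_ kM] /(modt_in_JJ t0)/j0_le].
by have := leq_mod k (tt t q); lia.
Qed.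

Lemma sum_inH_one_period (s t q M : nat) : (0 < t)%N ->
  (jlast s t q < M <= j0 s t q + tt t q)%N ->
  (\sum_(0 <= k < M | inH s t q k) k)%N = SJ s t q.
Proof.
move=> t0 /andP[lo hi]; rewrite SJE.
rewrite (@big_nat_widen _ _ _ 0 M (M + tt t q)) ?leq_addr //.
rewrite (@big_nat_widen _ _ _ 0 (tt t q) (M + tt t q)) ?leq_addl //.
apply: eq_bigl => k; case kH: (inH s t q k) => //=.
have [k_tt | tt_k] := ltnP k (tt t q).
  by have := @jlast_ge s t q k; rewrite mem_JJ k_tt kH; lia.
have := j0_le (modt_in_JJ t0 kH).
have : (tt t q <= k %/ tt t q * tt t q)%N by rewrite leq_pmull // divn_gt0 ?tt_gt0.
by have := divn_eq k (tt t q); lia.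
Qed.

Lemma sum_inH_periods (s t q u : nat) : (0 < t)%N ->
  (\sum_(0 <= k < u * tt t q | inH s t q k) k)%N
   = (u * SJ s t q + qhh t q * tt t q * (((u - 1) * u) %/ 2))%N.
Proof.
move=> t0; elim: u => [|u IH]; first by rewrite sub0n !mul0n div0n muln0 big_geq.
rewrite mulSn addnC (big_cat_nat (leq0n _) (leq_addr _ _)) /= IH.
have period : (\sum_(u * tt t q <= k < u * tt t q + tt t q | inH s t q k) k
             = SJ s t q + u * tt t q * qhh t q)%N.
  rewrite -{1}[(u * tt t q)%N]add0n big_addn addKn SJE -(count_inH s q t0).
  rewrite big_distrr /= -big_split /=.
  by apply: eq_big => [k | k _]; rewrite ?inH_addMt // muln1 addnC.
have -> : (((u.+1 - 1) * u.+1) %/ 2 = ((u - 1) * u) %/ 2 + u)%N.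
  by rewrite mulnC half_mul_predS mulnC.
by rewrite period mulSn !mulnDr; ring.
Qed.

Local Close Scope ring_scope.
Unset Implicit Arguments.

Theorem theorem10 (s t q N : nat) :
  s < q -> 1 <= t -> t < q -> ~~ (t %| q) -> 1 < gcdn t q ->
  let M := MM s t q N in
  let Sp := ((Splus s t q N)%:Z)%R in
  let S := SS s t q N in
  let ttl := tt t q in
  [/\ (M <= j0 s t q -> Sp = S),
      (j0 s t q < M <= jlast s t q ->
         Sp = (S + ((\sum_(0 <= k < M | inH s t q k) k)%N)%:Z)%R),
      (jlast s t q < M -> M <= j0 s t q + ttl ->
         Sp = (S + (SJ s t q)%:Z)%R) &
      (jlast s t q < M -> j0 s t q + ttl < M ->
         let u := (M - 1) %/ ttl in
         Sp = (S + ((u * SJ s t q)%N)%:Z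
                 + ((qhh t q * ttl * (((u - 1) * u) %/ 2))%N)%:Z
                 + ((\sum_(u * ttl <= k < M | inH s t q k) k)%N)%:Z)%R)].
Proof.
move=> sq t0 _ _ _ M Sp S ttl; have main := Splus_SS N t0 sq.
split=> [M_j0 | _ | lo hi | lo _ u]; rewrite /Sp main //.
- by rewrite sum_inH_le_j0 ?GRing.addr0.
- by rewrite sum_inH_one_period // lo.
have uM : u * ttl <= M by rewrite (leq_trans (leq_trunc_div _ _)) ?leq_subr.
by rewrite (big_cat_nat (leq0n _) uM) sum_inH_periods // !PoszD !GRing.addrA.
Qed.
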